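(* For $n\ge2$, the natural action of $\mathrm{O}(2n)$ on $\mathbb{F}_2^{2n}$ has exactly four orbits: $\{0\}$, $\{j\}$, $\mathbb{F}_2^{2n,+}\setminus\{0,j\}$, and $\mathbb{F}_2^{2n,-}$.
   Context: All arithmetic is over $\mathbb{F}_2$. $\mathrm{O}(2n)$ is the group of binary $2n\times 2n$ matrices $A$ with $A^TA=AA^T=I$. $j=(1,\dots,1)^T$; $\mathbb{F}_2^{2n,+}$ (resp. $\mathbb{F}_2^{2n,-}$) is the set of vectors of even (resp. odd) Hamming weight. *)

From mathcomp Require Import all_boot all_order all_algebra all_fingroup.
Set Implicit Arguments. Unset Strict Implicit. Unset Printing Implicit Defensive.
Import GRing.Theory.
Local Open Scope ring_scope.

Definition orth_group (m : nat) : {set 'M['F_2]_m} :=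
  [set A : 'M['F_2]_m | (A^T *m A == 1%:M) && (A *m A^T == 1%:M)].

Definition hweight (m : nat) (v : 'cV['F_2]_m) : nat :=
  #|[set i : 'I_m | v i 0 != 0]|.

Definition jvec (m : nat) : 'cV['F_2]_m := const_mx 1.

Definition even_vecs (m : nat) : {set 'cV['F_2]_m} :=
  [set v : 'cV['F_2]_m | ~~ odd (hweight v)].
Definition odd_vecs (m : nat) : {set 'cV['F_2]_m} :=
  [set v : 'cV['F_2]_m | odd (hweight v)].

Definition orth_orbit (m : nat) (v : 'cV['F_2]_m) : {set 'cV['F_2]_m} :=
  [set A *m v | A in orth_group m].

Definition orth_orbits (m : nat) : {set {set 'cV['F_2]_m}} :=
  [set orth_orbit v | v : 'cV['F_2]_m].

From mathcomp Require Import all_boot all_order all_algebra all_fingroup zify.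
Set Implicit Arguments. Unset Strict Implicit. Unset Printing Implicit Defensive.
Import GRing.Theory.
Local Open Scope ring_scope.

(* Orthogonal matrices preserve x.y = \sum_i x_i y_i, and x.x is the parity of
   the weight of x; they also fix j, since every row of an orthogonal matrix
   has odd weight.  Hence {0}, {j} and the nonzero even/odd vectors are unions
   of orbits.  Conversely, for isotropic u the transvection x |-> x + (u.x) u is
   orthogonal, and u = v + w maps v to w as soon as v.v = w.w and v.w <> v.v.
   If v.w = v.v and neither v nor w is 0 or j, an intermediate z with
   z.z = v.v and z.v <> v.v, z.w <> v.v exists: a sum of two unit vectors on
   coordinates where both v and w change (even case), or a unit vector on a
   coordinate where both vanish, which exists because the dimension is even
   (odd case). *)

Lemma F2_cases (x : 'F_2) : x = 0 \/ x = 1.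
Proof. by case: x => [[|[|k]] Hk]; [left|right|by []]; exact/val_inj. Qed.

Lemma F2_addrr (x : 'F_2) : x + x = 0.
Proof. exact: (addrr_pchar2 (pchar_Fp (isT : prime 2))). Qed.

Lemma F2_addr_eq0 (x y : 'F_2) : (x + y == 0) = (x == y).
Proof. by case: (F2_cases x) => ->; case: (F2_cases y) => ->. Qed.

Lemma F2_mulrr (x : 'F_2) : x * x = x.
Proof. by case: (F2_cases x) => ->; rewrite ?mul0r ?mul1r. Qed.

Lemma F2_mx_addrr p q (M : 'M['F_2]_(p, q)) : M + M = 0.
Proof. by apply/matrixP => i j; rewrite !mxE F2_addrr. Qed.

Lemma F2_natr (k : nat) : (k%:R : 'F_2) = (odd k)%:R.
Proof. by rewrite -(Fp_nat_mod (isT : prime 2)) modn2. Qed.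

Section DotProduct.

Variable m : nat.
Implicit Types x y z : 'cV['F_2]_m.

Definition dot x y : 'F_2 := \sum_i x i 0 * y i 0.

Lemma dot_mx x y : dot x y = (x^T *m y) 0 0.
Proof. by rewrite mxE; apply: eq_bigr => i _; rewrite mxE. Qed.

Lemma dotC x y : dot x y = dot y x.
Proof. by apply: eq_bigr => i _; rewrite mulrC. Qed.

Lemma dotDl x y z : dot (x + y) z = dot x z + dot y z.
Proof. by rewrite /dot -big_split; apply: eq_bigr => i _; rewrite mxE mulrDl. Qed.

Lemma dotDr x y z : dot x (y + z) = dot x y + dot x z.
Proof. by rewrite !(dotC x) dotDl. Qed.

Lemma dot_delta_mxr x i : dot x (delta_mx i 0) = x i 0.
Proof.
rewrite /dot (bigD1 i) //= big1 => [|k ki]; first by rewrite mxE !eqxx mulr1 addr0.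
by rewrite mxE (negbTE ki) mulr0.
Qed.

Lemma dot_delta_mxl x i : dot (delta_mx i 0) x = x i 0.
Proof. by rewrite dotC dot_delta_mxr. Qed.

Lemma dot_jvecr x : dot x (jvec m) = dot x x.
Proof. by apply: eq_bigr => i _; rewrite mxE mulr1 F2_mulrr. Qed.

Lemma dot_self x : dot x x = (odd (hweight x))%:R.
Proof.
rewrite -F2_natr /hweight -sum1_card natr_sum big_mkcond /=.
by apply: eq_bigr => i _; rewrite inE F2_mulrr; case: (F2_cases (x i 0)) => ->.
Qed.

Lemma hweight_jvec : hweight (jvec m) = m.
Proof. by rewrite /hweight -[RHS]card_ord; apply: eq_card => i; rewrite !inE mxE. Qed.

Lemma odd_hweight x : odd (hweight x) = (dot x x == 1).
Proof. by rewrite dot_self; case: odd; rewrite ?eqxx // eq_sym oner_eq0. Qed.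

Lemma dot_self_eq x y : (dot x x == dot y y) = (odd (hweight x) == odd (hweight y)).
Proof.
rewrite !dot_self.
by case: (odd _); case: (odd _); rewrite ?eqxx // ?oner_eq0 // eq_sym oner_eq0.
Qed.

Lemma dot0l x : dot 0 x = 0.
Proof. by rewrite /dot big1 // => i _; rewrite mxE mul0r. Qed.

Lemma dot_jvec_even : ~~ odd m -> dot (jvec m) (jvec m) = 0.
Proof. by rewrite dot_self hweight_jvec => /negbTE ->. Qed.

Lemma dot_delta_mx_pair i k :
  dot (delta_mx i 0 + delta_mx k 0) (delta_mx i 0 + delta_mx k 0) = 0.
Proof. by rewrite -dot_jvecr dotC dotDr !dot_delta_mxr !mxE F2_addrr. Qed.

Lemma dot_neq0 x y : dot x y != 0 -> exists i, x i 0 * y i 0 != 0.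
Proof.
move=> xy_neq0; apply/existsP; apply: contraNT xy_neq0 => /existsPn xy_orth.
by apply/eqP/big1 => i _; apply/eqP/negPn/xy_orth.
Qed.

Lemma cV_neq_const x c : x != const_mx c -> exists i, x i 0 != c.
Proof.
move=> x_neq_c; apply/existsP; apply: contraNT x_neq_c => /existsPn x_const.
by apply/eqP/matrixP => i k; rewrite ord1 mxE; apply/eqP/negPn/x_const.
Qed.

End DotProduct.

Section OrthogonalGroup.

Variable m : nat.
Implicit Types (x y : 'cV['F_2]_m) (A B : 'M['F_2]_m).

Lemma orth_groupP A :
  reflect (A^T *m A = 1%:M /\ A *m A^T = 1%:M) (A \in orth_group m).
Proof. by rewrite inE; apply: (iffP andP) => -[/eqP ? /eqP ?]. Qed.

Lemma orth_group1 : 1%:M \in orth_group m.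
Proof. by apply/orth_groupP; rewrite trmx1 mul1mx. Qed.

Lemma orth_groupM A B :
  A \in orth_group m -> B \in orth_group m -> A *m B \in orth_group m.
Proof.
move=> /orth_groupP[AtA AAt] /orth_groupP[BtB BBt]; apply/orth_groupP.
rewrite trmx_mul -!mulmxA (mulmxA A^T) AtA mul1mx (mulmxA B) BBt mul1mx.
by split.
Qed.

Lemma orth_mulKmx A x : A \in orth_group m -> A^T *m (A *m x) = x.
Proof. by case/orth_groupP => AtA _; rewrite mulmxA AtA mul1mx. Qed.

Lemma dot_orth A x y : A \in orth_group m -> dot (A *m x) (A *m y) = dot x y.
Proof.
by case/orth_groupP => AtA _; rewrite !dot_mx trmx_mul -mulmxA (mulmxA A^T) AtA mul1mx.
Qed.

(* (A j)_i is the sum of row i, which is its squared norm (A A^T)_ii = 1. *)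
Lemma orth_jvec A : A *m A^T = 1%:M -> A *m jvec m = jvec m.
Proof.
move=> /matrixP AAt; apply/matrixP => i k; rewrite ord1 !mxE.
move: (AAt i i); rewrite !mxE eqxx mulr1n => <-.
by apply: eq_bigr => l _; rewrite !mxE mulr1 F2_mulrr.
Qed.

Definition transvection x : 'M['F_2]_m := 1%:M + x *m x^T.

Lemma transvectionE x y : transvection x *m y = y + dot x y *: x.
Proof.
rewrite mulmxDl mul1mx -mulmxA; congr (_ + _).
by apply/matrixP => i k; rewrite ord1 !mxE big_ord1 dot_mx mulrC.
Qed.

Lemma transvection_orth x : dot x x = 0 -> transvection x \in orth_group m.
Proof.
move=> xx0; have xtx0 : x^T *m x = 0.
  by apply/matrixP => i k; rewrite !ord1 -dot_mx xx0 mxE.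
have T_tr : (transvection x)^T = transvection x.
  by rewrite linearD /= trmx1 trmx_mul trmxK.
have T_sq : transvection x *m transvection x = 1%:M.
  rewrite mulmxDl !mulmxDr !mul1mx mulmx1 -!mulmxA (mulmxA x^T) xtx0.
  by rewrite mul0mx mulmx0 addr0 -addrA F2_mx_addrr addr0.
by apply/orth_groupP; rewrite T_tr.
Qed.

End OrthogonalGroup.

Section Orbits.

Variable m : nat.
Implicit Types (v w x z : 'cV['F_2]_m).

Lemma orth_orbitP v w :
  reflect (exists2 A, A \in orth_group m & w = A *m v) (w \in orth_orbit v).
Proof. exact: imsetP. Qed.

Lemma orth_orbit_trans z v w :
  z \in orth_orbit v -> w \in orth_orbit z -> w \in orth_orbit v.
Proof.
move=> /orth_orbitP[A OA ->] /orth_orbitP[B OB ->]; apply/orth_orbitP.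
by exists (B *m A); [apply: orth_groupM | rewrite mulmxA].
Qed.

(* Over F_2 the cross terms cancel, so u = v + w is isotropic and u.v = 1. *)
Lemma orth_orbit_transvection v w :
  dot v v = dot w w -> dot v w != dot v v -> w \in orth_orbit v.
Proof.
move=> vv_ww vw_neq; apply/orth_orbitP; exists (transvection (v + w)).
  apply: transvection_orth; rewrite !(dotDl, dotDr) (dotC w) vv_ww.
  by rewrite -addrA (addrA (dot v w)) !F2_addrr add0r F2_addrr.
have uv1 : dot (v + w) v = 1.
  move: vw_neq; rewrite dotDl (dotC w) addrC -F2_addr_eq0.
  by case: (F2_cases (dot v w + dot v v)) => ->.
by rewrite transvectionE uv1 scale1r addrA F2_mx_addrr add0r.
Qed.

Lemma cV_nonconstant x i : x != 0 -> x != jvec m -> exists k, x k 0 != x i 0.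
Proof. by case: (F2_cases (x i 0)) => -> x0 xj; apply: cV_neq_const. Qed.

Lemma exists_separating_index v w :
  v != 0 -> v != jvec m -> w != 0 -> w != jvec m ->
  exists i k, v i 0 != v k 0 /\ w i 0 != w k 0.
Proof.
move=> v0 vj w0 wj; have [k _] := cV_neq_const v0.
have [i vik] := cV_nonconstant k v0 vj; have [l wlk] := cV_nonconstant k w0 wj.
have [vlk | /negPn/eqP vlk] := boolP (v l 0 != v k 0); first by exists l, k.
have [wik | /negPn/eqP wik] := boolP (w i 0 != w k 0); first by exists i, k.
by exists i, l; rewrite vlk wik; split; rewrite // eq_sym.
Qed.

Lemma exists_common_zero v w : ~~ odd m ->
  dot v v = 1 -> dot w w = 1 -> dot v w = 1 -> exists i, v i 0 = 0 /\ w i 0 = 0.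
Proof.
move=> m_even vv1 ww1 vw1.
have : dot (jvec m + v) (jvec m + w) != 0.
  rewrite !(dotDl, dotDr) dot_jvec_even // (dotC _ w) !dot_jvecr vv1 ww1 vw1.
  by rewrite add0r F2_addrr addr0 oner_neq0.
case/dot_neq0 => i; rewrite mulf_eq0 negb_or !mxE !F2_addr_eq0 => /andP[v1 w1].
exists i; split; [move: v1 | move: w1].
  by case: (F2_cases (v i 0)) => ->.
by case: (F2_cases (w i 0)) => ->.
Qed.

Lemma orth_orbit_transitive v w : ~~ odd m ->
  v \notin [set 0; jvec m] -> w \notin [set 0; jvec m] ->
  dot v v = dot w w -> w \in orth_orbit v.
Proof.
move=> m_even; rewrite !inE !negb_or => /andP[v0 vj] /andP[w0 wj] vv_ww.
have [vw_vv|] := eqVneq (dot v w) (dot v v); last exact: orth_orbit_transvection.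
suff [z [zz_vv vz zw]] : exists z,
    [/\ dot z z = dot v v, dot v z != dot v v & dot z w != dot z z].
  by apply: (@orth_orbit_trans z); apply: orth_orbit_transvection; rewrite -?vv_ww.
case: (F2_cases (dot v v)) => vv.
  have [i [k [vik wik]]] := exists_separating_index v0 vj w0 wj.
  exists (delta_mx i 0 + delta_mx k 0); rewrite dot_delta_mx_pair vv; split => //.
    by rewrite dotDr !dot_delta_mxr F2_addr_eq0.
  by rewrite dotC dotDr !dot_delta_mxr F2_addr_eq0.
rewrite vv in vv_ww vw_vv.
have [i [vi wi]] := exists_common_zero m_even vv (esym vv_ww) vw_vv.
exists (delta_mx i 0); rewrite vv !dot_delta_mxl dot_delta_mxr vi wi mxE !eqxx.
by split; rewrite // eq_sym oner_neq0.
Qed.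

Lemma orth_orbit0 : orth_orbit (0 : 'cV['F_2]_m) = [set 0].
Proof.
apply/setP => w; rewrite inE; apply/orth_orbitP/eqP => [[A _ ->]|->].
  by rewrite mulmx0.
by exists 1%:M; rewrite ?mulmx0 ?orth_group1.
Qed.

Lemma orth_orbit_jvec : orth_orbit (jvec m) = [set jvec m].
Proof.
apply/setP => w; rewrite inE; apply/orth_orbitP/eqP => [[A /orth_groupP[_ AAt] ->]|->].
  exact: orth_jvec.
by exists 1%:M; rewrite ?mul1mx ?orth_group1.
Qed.

Lemma orth_orbit_nontrivial v : ~~ odd m -> v \notin [set 0; jvec m] ->
  orth_orbit v = [set w | (w \notin [set 0; jvec m]) && (dot w w == dot v v)].
Proof.
move=> m_even v_nontriv; apply/setP => w; rewrite inE.
apply/idP/andP => [/orth_orbitP[A OA ->]|[w_nontriv /eqP ww_vv]]; last first.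
  exact: orth_orbit_transitive.
split; last by rewrite dot_orth.
apply: contra v_nontriv; rewrite !inE => /orP[]/eqP Av; rewrite -(orth_mulKmx v OA) Av.
  by rewrite mulmx0 eqxx.
by case/orth_groupP: OA => AtA _; rewrite orth_jvec ?trmxK // eqxx orbT.
Qed.

Lemma odd_hweight_nontrivial w : ~~ odd m -> odd (hweight w) ->
  w \notin [set 0; jvec m].
Proof.
move=> m_even; apply: contraL; rewrite odd_hweight !inE => /orP[]/eqP ->.
  by rewrite dot0l eq_sym oner_eq0.
by rewrite dot_jvec_even // eq_sym oner_eq0.
Qed.

Lemma orth_orbit_parity v : ~~ odd m -> v \notin [set 0; jvec m] ->
  orth_orbit v =
    if odd (hweight v) then odd_vecs m else even_vecs m :\: [set 0; jvec m].
Proof.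
move=> m_even v_nontriv; rewrite orth_orbit_nontrivial //; apply/setP => w.
rewrite in_set dot_self_eq; case: ifP => v_odd.
  rewrite eqb_id [w \in odd_vecs m]inE.
  by case: (boolP (odd _)) => [/(odd_hweight_nontrivial m_even) ->|]; rewrite ?andbF.
by rewrite eqbF_neg in_setD [w \in even_vecs m]inE.
Qed.

End Orbits.

Lemma exists_odd_hweight m : (0 < m)%N -> exists v : 'cV['F_2]_m, odd (hweight v).
Proof.
move=> m_gt0; exists (delta_mx (Ordinal m_gt0) 0).
by rewrite odd_hweight dot_delta_mxl mxE !eqxx.
Qed.

Lemma exists_even_hweight_nontrivial m : (2 < m)%N ->
  exists2 v : 'cV['F_2]_m, v \notin [set 0; jvec m] & ~~ odd (hweight v).
Proof.
move=> m_gt2; pose i k (k_lt3 : (k < 3)%N) : 'I_m := Ordinal (leq_trans k_lt3 m_gt2).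
exists (delta_mx (i 0 isT) 0 + delta_mx (i 1 isT) 0).
  rewrite !inE negb_or; apply/andP; split; apply/eqP => /matrixP.
    by move/(_ (i 0 isT) 0); rewrite !mxE /= addr0 => /eqP; rewrite oner_eq0.
  by move/(_ (i 2 isT) 0); rewrite !mxE /= addr0 => /eqP; rewrite eq_sym oner_eq0.
by rewrite odd_hweight dot_delta_mx_pair eq_sym oner_eq0.
Qed.

Lemma orth_orbits_even_dim m : ~~ odd m -> (2 < m)%N ->
  orth_orbits m =
    [set [set 0]; [set jvec m]; even_vecs m :\: [set 0; jvec m]; odd_vecs m].
Proof.
move=> m_even m_gt2; apply/setP => S; apply/imsetP/idP => [[v _ ->]|].
  have [->|v0] := eqVneq v 0; first by rewrite orth_orbit0 !inE eqxx.
  have [->|vj] := eqVneq v (jvec m); first by rewrite orth_orbit_jvec !inE eqxx orbT.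
  rewrite orth_orbit_parity //; last by rewrite !inE negb_or v0 vj.
  by case: ifP; rewrite !inE eqxx ?orbT.
have [e e_nontriv e_even] := exists_even_hweight_nontrivial m_gt2.
have [o o_odd] := exists_odd_hweight (ltnW (ltnW m_gt2)).
rewrite !inE => /orP[/orP[/orP[]|]|] /eqP ->.
- by exists 0; rewrite ?orth_orbit0.
- by exists (jvec m); rewrite ?orth_orbit_jvec.
- by exists e; rewrite // orth_orbit_parity // (negbTE e_even).
- by exists o; rewrite // orth_orbit_parity ?o_odd ?odd_hweight_nontrivial.
Qed.

Lemma eq_set_memF (T : finType) (A B : {set T}) x :
  x \in A -> x \notin B -> (A == B) = false.
Proof. by move=> xA; apply: contraNF => /eqP <-. Qed.

Lemma card_orth_orbits_even_dim m : ~~ odd m -> (2 < m)%N -> #|orth_orbits m| = 4.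
Proof.
move=> m_even m_gt2; rewrite orth_orbits_even_dim //.
have [e e_nontriv e_even] := exists_even_hweight_nontrivial m_gt2.
have j_neq0 : jvec m != 0.
  by apply/eqP => /matrixP/(_ (Ordinal (ltnW (ltnW m_gt2))) 0) /eqP; rewrite !mxE oner_eq0.
have even0 : ~~ odd (hweight (0 : 'cV['F_2]_m)).
  by rewrite odd_hweight dot0l eq_sym oner_eq0.
have evenj : ~~ odd (hweight (jvec m)) by rewrite hweight_jvec.
rewrite -!setUA !cardsU1 cards1 !inE.
have S0_neq (X : {set 'cV['F_2]_m}) : 0 \notin X -> ([set 0] == X) = false.
  by apply: eq_set_memF; rewrite inE.
have Sj_neq (X : {set 'cV['F_2]_m}) : jvec m \notin X -> ([set jvec m] == X) = false.
  by apply: eq_set_memF; rewrite inE.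
rewrite !S0_neq ?Sj_neq ?(@eq_set_memF _ _ _ e) //.
all: by rewrite ?in_setD ?e_nontriv !inE ?eqxx ?orbT ?e_even ?evenj ?even0 // eq_sym.
Qed.

Theorem mainTheorem14 (n : nat) (hn : (2 <= n)%N) :
  orth_orbits (2 * n) =
    [set [set 0%R]; [set jvec (2 * n)];
         even_vecs (2 * n) :\: [set 0%R; jvec (2 * n)];
         odd_vecs (2 * n)]
  /\ #|orth_orbits (2 * n)| = 4%N.
Proof.
have m_even : ~~ odd (2 * n) by rewrite mul2n odd_double.
have m_gt2 : (2 < 2 * n)%N by lia.
by rewrite card_orth_orbits_even_dim // orth_orbits_even_dim.
Qed.
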